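(* There is a natural transformation $\iota\colon M\otimes-\to N\otimes-$ of endofunctors of $\mathsf{SquaMS}$ whose component $\iota_X\colon M\otimes X\to N\otimes X$ is the inclusion $m\otimes x\mapsto m\otimes x$.
   Context: Let $M_0=\{(r,s)\in[0,1]^2: r\in\{0,1\}\text{ or } s\in\{0,1\}\}$. A square metric space is a pair $(X,S_X)$ with $X$ a metric space with all distances at most $2$ and $S_X\colon M_0\to X$ injective such that (sq1) for $i\in\{0,1\}$, $r,s\in[0,1]$: $d_X(S_X(i,r),S_X(i,s))=|s-r|$ and $d_X(S_X(r,i),S_X(s,i))=|s-r|$; (sq2) $d_X(S_X(r,s),S_X(t,u))\ge|r-t|+|s-u|$. $\mathsf{SquaMS}$: these objects, with short maps $f$ satisfying $f\circ S_X=S_Y$ as morphisms. Let $N=\{0,1,2\}^2$, $M=N\setminus\{(1,1)\}$, also viewed as points of $\mathbb{R}^2$. For $P\in\{M,N\}$ and $X$ in $\mathsf{SquaMS}$, $P\otimes X=(P\times X)/\!\sim$, where $\sim$ is generated by $(m,S_X(p))\sim(n,S_X(q))$ whenever $m,n\in P$ differ by exactly $1$ in exactly one coordinate and $(m+p)/3=(n+q)/3$; $m\otimes x$ is the class of $(m,x)$; the metric is the quotient of $d((a,u),(b,v))=\frac13 d_X(u,v)$ if $a=b$, $2$ otherwise (infimum over finite chains, $\sim$-related consecutive pairs counting $0$); $S_{P\otimes X}(p)=m\otimes S_X(3p-m)$ for any $m\in P$ with $p\in(m+[0,1]^2)/3$; $(P\otimes f)(m\otimes x)=m\otimes f(x)$.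 *)

From Stdlib Require Import Reals Lra Lia Relations.
From Coquelicot Require Import Coquelicot.
Open Scope R_scope.

(** The boundary M_0 of the unit square. S_X is modelled as a function
    R -> R -> X whose axioms are only imposed on points of M_0. *)
Definition M0 (r s : R) : Prop :=
  0 <= r <= 1 /\ 0 <= s <= 1 /\ (r = 0 \/ r = 1 \/ s = 0 \/ s = 1).

Record SquaMS := {
  sq_car :> Type;
  sq_d : sq_car -> sq_car -> R;
  sq_d_eq0 : forall x y, sq_d x y = 0 <-> x = y;
  sq_d_sym : forall x y, sq_d x y = sq_d y x;
  sq_d_tri : forall x y z, sq_d x z <= sq_d x y + sq_d y z;
  sq_d_le2 : forall x y, sq_d x y <= 2;
  sq_S : R -> R -> sq_car;
  sq_S_inj : forall r s t u, M0 r s -> M0 t u ->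
      sq_S r s = sq_S t u -> r = t /\ s = u;
  sq1 : forall i r s, (i = 0 \/ i = 1) -> 0 <= r <= 1 -> 0 <= s <= 1 ->
      sq_d (sq_S i r) (sq_S i s) = Rabs (s - r) /\
      sq_d (sq_S r i) (sq_S s i) = Rabs (s - r);
  sq2 : forall r s t u, M0 r s -> M0 t u ->
      Rabs (r - t) + Rabs (s - u) <= sq_d (sq_S r s) (sq_S t u)
}.

Definition is_morphism (X Y : SquaMS) (f : X -> Y) : Prop :=
  (forall x y, sq_d Y (f x) (f y) <= sq_d X x y) /\
  (forall r s, M0 r s -> f (sq_S X r s) = sq_S Y r s).

Definition inN (m : nat * nat) : Prop := (fst m <= 2 /\ snd m <= 2)%nat.
Definition inM (m : nat * nat) : Prop := inN m /\ m <> (1%nat, 1%nat).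

Lemma inM_inN : forall m, inM m -> inN m.
Proof. intros m [H _]; exact H. Qed.

(** Representatives of points of P ⊗ X: pairs (m, x) with m in P. *)
Definition tens_car (P : nat * nat -> Prop) (X : SquaMS) : Type :=
  ({m : nat * nat | P m} * sq_car X)%type.

Definition idx {P : nat * nat -> Prop} {X : SquaMS} (a : tens_car P X) : nat * nat :=
  proj1_sig (fst a).

Definition adjacent (m n : nat * nat) : Prop :=
  ((fst m = S (fst n) \/ fst n = S (fst m)) /\ snd m = snd n) \/
  (fst m = fst n /\ (snd m = S (snd n) \/ snd n = S (snd m))).

Definition tens_gen (P : nat * nat -> Prop) (X : SquaMS) (a b : tens_car P X) : Prop :=
  adjacent (idx a) (idx b) /\
  exists p1 p2 q1 q2, M0 p1 p2 /\ M0 q1 q2 /\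
    snd a = sq_S X p1 p2 /\ snd b = sq_S X q1 q2 /\
    (INR (fst (idx a)) + p1) / 3 = (INR (fst (idx b)) + q1) / 3 /\
    (INR (snd (idx a)) + p2) / 3 = (INR (snd (idx b)) + q2) / 3.

(** The equivalence relation ~ generated by tens_gen. Equality of points of
    P ⊗ X is ~ on representatives. *)
Definition tens_rel (P : nat * nat -> Prop) (X : SquaMS) : relation (tens_car P X) :=
  clos_refl_sym_trans _ (tens_gen P X).

Definition base_d {P : nat * nat -> Prop} {X : SquaMS} (a b : tens_car P X) : R :=
  if andb (Nat.eqb (fst (idx a)) (fst (idx b))) (Nat.eqb (snd (idx a)) (snd (idx b)))
  then sq_d X (snd a) (snd b) / 3 else 2.

Inductive chain_cost (P : nat * nat -> Prop) (X : SquaMS) :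
    tens_car P X -> tens_car P X -> R -> Prop :=
  | chain_nil : forall a, chain_cost P X a a 0
  | chain_rel : forall u v b c, tens_rel P X u v -> chain_cost P X v b c ->
      chain_cost P X u b c
  | chain_step : forall u v b c, chain_cost P X v b c ->
      chain_cost P X u b (base_d u v + c).

Definition tens_d (P : nat * nat -> Prop) (X : SquaMS) (a b : tens_car P X) : R :=
  real (Glb_Rbar (chain_cost P X a b)).

Definition cell (m : nat * nat) (r s : R) : Prop :=
  INR (fst m) <= 3 * r <= INR (fst m) + 1 /\
  INR (snd m) <= 3 * s <= INR (snd m) + 1.

Definition tens_S (P : nat * nat -> Prop) (X : SquaMS) (m : nat * nat) (Hm : P m)
    (r s : R) : tens_car P X :=
  (exist _ m Hm, sq_S X (3 * r - INR (fst m)) (3 * s - INR (snd m))).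

Definition tens_map (P : nat * nat -> Prop) (X Y : SquaMS) (f : X -> Y)
    (a : tens_car P X) : tens_car P Y :=
  (fst a, f (snd a)).

Definition incl_MN (X : SquaMS) (a : tens_car inM X) : tens_car inN X :=
  (exist _ (idx a) (inM_inN _ (proj2_sig (fst a))), snd a).

(* Every generator of ~ on M × X is a generator on N × X, and every chain in
   M × X is a chain of the same cost in N × X, so the map respects ~ and can only decrease
   the infimum defining the quotient metric. Two representatives m ⊗ S_X(3p - m) and
   n ⊗ S_X(3p - n) of S_{N⊗X}(p) are related because the cells of m and n overlap at p:
   their coordinates differ by at most 1, so one passes from m to n through the cell of
   (n_1, m_2) by at most two generating steps. Naturality holds on the nose. *)

From Stdlib Require Import Reals Relations.
From Coquelicot Require Import Coquelicot.
From Stdlib Require Import Lra Lia ProofIrrelevance.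
Open Scope R_scope.

Lemma real_Glb_Rbar_le_subset (E1 E2 : R -> Prop) :
  (forall c, E2 c -> E1 c) -> (forall c, E1 c -> 0 <= c) -> (exists c, E2 c) ->
  real (Glb_Rbar E1) <= real (Glb_Rbar E2).
Proof.
  intros sub12 E1_ge0 [c2 E2c2].
  destruct (Glb_Rbar_correct E1) as [lb1 glb1].
  destruct (Glb_Rbar_correct E2) as [lb2 glb2].
  assert (ge0 : Rbar_le 0 (Glb_Rbar E1)) by (apply glb1; intros c Ec; exact (E1_ge0 c Ec)).
  assert (le12 : Rbar_le (Glb_Rbar E1) (Glb_Rbar E2))
    by (apply glb2; intros c Ec; apply lb1, sub12, Ec).
  assert (le2c : Rbar_le (Glb_Rbar E2) c2) by (apply lb2, E2c2).
  destruct (Glb_Rbar E1), (Glb_Rbar E2); simpl in *; try contradiction; lra.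
Qed.

Lemma sq_d_ge0 (X : SquaMS) (x y : X) : 0 <= sq_d X x y.
Proof.
  pose proof (sq_d_tri X x y x) as tri.
  rewrite (sq_d_sym X y x), (proj2 (sq_d_eq0 X x x) eq_refl) in tri.
  lra.
Qed.

Lemma base_d_ge0 P X (a b : tens_car P X) : 0 <= base_d a b.
Proof.
  unfold base_d; destruct (_ && _)%bool; [|lra].
  pose proof (sq_d_ge0 X (snd a) (snd b)); lra.
Qed.

Lemma chain_cost_ge0 P X a b c : chain_cost P X a b c -> 0 <= c.
Proof.
  induction 1; [lra | assumption |].
  pose proof (base_d_ge0 P X u v); lra.
Qed.

Lemma chain_cost_exists P X (a b : tens_car P X) : exists c, chain_cost P X a b c.
Proof. exists (base_d a b + 0); apply chain_step, chain_nil. Qed.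

Section Inclusion.

Variables (P Q : nat * nat -> Prop) (PQ : forall m, P m -> Q m) (X : SquaMS).

Definition tens_incl (a : tens_car P X) : tens_car Q X :=
  (exist _ (idx a) (PQ _ (proj2_sig (fst a))), snd a).

Lemma tens_rel_incl a b : tens_rel P X a b -> tens_rel Q X (tens_incl a) (tens_incl b).
Proof.
  induction 1.
  - apply rst_step; assumption.
  - apply rst_refl.
  - apply rst_sym; assumption.
  - eapply rst_trans; eassumption.
Qed.

Lemma chain_cost_incl a b c :
  chain_cost P X a b c -> chain_cost Q X (tens_incl a) (tens_incl b) c.
Proof.
  induction 1.
  - apply chain_nil.
  - eapply chain_rel; [apply tens_rel_incl|]; eassumption.
  - exact (chain_step Q X (tens_incl u) (tens_incl v) _ _ IHchain_cost).
Qed.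

Lemma tens_d_incl_le a b : tens_d Q X (tens_incl a) (tens_incl b) <= tens_d P X a b.
Proof.
  apply real_Glb_Rbar_le_subset.
  - intros c; apply chain_cost_incl.
  - intros c; apply chain_cost_ge0.
  - apply chain_cost_exists.
Qed.

End Inclusion.

Lemma overlapping_unit_intervals (a b : nat) (x : R) :
  INR a <= x <= INR a + 1 -> INR b <= x <= INR b + 1 -> a = b \/ a = S b \/ b = S a.
Proof.
  intros xa xb.
  assert (INR a <= INR (S b)) by (rewrite S_INR; lra).
  assert (INR b <= INR (S a)) by (rewrite S_INR; lra).
  assert (a <= S b)%nat by (apply INR_le; assumption).
  assert (b <= S a)%nat by (apply INR_le; assumption).
  lia.
Qed.

Section Cells.

Variables (P : nat * nat -> Prop) (X : SquaMS) (r s : R).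

Lemma tens_gen_adjacent_cells m k (Hm : P m) (Hk : P k) :
  cell m r s -> cell k r s -> adjacent m k ->
  tens_gen P X (tens_S P X m Hm r s) (tens_S P X k Hk r s).
Proof.
  intros cm ck mk; split; [exact mk|].
  destruct m as [m1 m2], k as [k1 k2]; unfold cell, M0, adjacent in *; simpl in *.
  exists (3 * r - INR m1), (3 * s - INR m2), (3 * r - INR k1), (3 * s - INR k2).
  (* on the common edge of the two cells one local coordinate is 0 and the other is 1 *)
  destruct mk as [[[-> | ->] <-] | [<- [-> | ->]]]; rewrite ?S_INR in *;
    repeat split; try lra; auto;
    first [left; lra | right; left; lra | right; right; left; lra | right; right; right; lra].
Qed.

Lemma tens_rel_near_cells m k (Hm : P m) (Hk : P k) :
  cell m r s -> cell k r s -> m = k \/ adjacent m k ->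
  tens_rel P X (tens_S P X m Hm r s) (tens_S P X k Hk r s).
Proof.
  intros cm ck [<- | mk].
  - rewrite (proof_irrelevance _ Hm Hk); apply rst_refl.
  - apply rst_step, tens_gen_adjacent_cells; assumption.
Qed.

End Cells.

Lemma tens_rel_inN_cells X r s m n (Hm : inN m) (Hn : inN n) :
  cell m r s -> cell n r s -> tens_rel inN X (tens_S inN X m Hm r s) (tens_S inN X n Hn r s).
Proof.
  destruct m as [m1 m2], n as [n1 n2]; intros [cm1 cm2] [cn1 cn2]; simpl in *.
  assert (Hk : inN (n1, m2)) by (destruct Hm, Hn; split; simpl in *; lia).
  assert (ck : cell (n1, m2) r s) by (split; simpl; lra).
  apply rst_trans with (tens_S inN X (n1, m2) Hk r s); apply tens_rel_near_cells;
    try split; try assumption.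
  - destruct (overlapping_unit_intervals m1 n1 (3 * r)) as [<- | [e | e]]; auto;
      right; left; simpl; auto.
  - destruct (overlapping_unit_intervals m2 n2 (3 * s)) as [<- | [e | e]]; auto;
      right; right; simpl; auto.
Qed.

Theorem mainTheorem17 :
  (* iota_X is well defined on classes *)
  (forall (X : SquaMS) (a b : tens_car inM X),
      tens_rel inM X a b -> tens_rel inN X (incl_MN X a) (incl_MN X b)) /\
  (* iota_X is short *)
  (forall (X : SquaMS) (a b : tens_car inM X),
      tens_d inN X (incl_MN X a) (incl_MN X b) <= tens_d inM X a b) /\
  (* iota_X commutes with S: iota_X o S_{M⊗X} = S_{N⊗X} *)
  (forall (X : SquaMS) (r s : R) (m n : nat * nat) (Hm : inM m) (Hn : inN n),
      M0 r s -> cell m r s -> cell n r s ->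
      tens_rel inN X (incl_MN X (tens_S inM X m Hm r s)) (tens_S inN X n Hn r s)) /\
  (* naturality: (N ⊗ f) o iota_X = iota_Y o (M ⊗ f) *)
  (forall (X Y : SquaMS) (f : X -> Y), is_morphism X Y f ->
      forall a : tens_car inM X,
      tens_rel inN Y (tens_map inN X Y f (incl_MN X a)) (incl_MN Y (tens_map inM X Y f a))).
Proof.
  split; [exact (fun X => tens_rel_incl inM inN inM_inN X)|].
  split; [exact (fun X => tens_d_incl_le inM inN inM_inN X)|].
  split.
  - intros X r s m n Hm Hn _; apply tens_rel_inN_cells.
  - intros; apply rst_refl.
Qed.
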